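(* Let $\mathcal{T}=(\mathcal{V},\mathcal{E})$ obey the LC-PF model and covariance assumption of the context, with $\Omega_p(c,c)+\Omega_q(c,c)>0$ for every non-root node $c$. Let $\mathcal{M}\subset\mathcal{V}$ be a set of non-root (''missing'') nodes, each of degree at most $2$ in $\mathcal{T}$, and let $\mathcal{O}=\mathcal{V}\setminus\mathcal{M}$ be the observed nodes. Let $\mathcal{T}_{\mathcal{M}}$ be the minimum weight spanning tree of the complete graph on $\mathcal{O}$ with edge weights $\phi_{ab}$. Then every edge of $\mathcal{T}$ joining two observed nodes is an edge of $\mathcal{T}_{\mathcal{M}}$. Every other (spurious) edge of $\mathcal{T}_{\mathcal{M}}$ joins two observed nodes that are separated in $\mathcal{T}$ by missing nodes, i.e. whose connecting path in $\mathcal{T}$ has all interior nodes in $\mathcal{M}$.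
   Context: $\mathcal{T}=(\mathcal{V},\mathcal{E})$ is a tree with a distinguished root node (the substation) of degree one. Each edge $(ab)$ has resistance $r_{ab}>0$ and reactance $x_{ab}>0$. Let $H_{1/r}$ (resp. $H_{1/x}$) be the weighted Laplacian of $\mathcal{T}$ with edge weights $1/r_{ab}$ (resp. $1/x_{ab}$), with the root row and column removed. Non-root nodes have random injections $p_a,q_a$. The LC-PF model gives the voltage magnitude deviations $v=H_{1/r}^{-1}p+H_{1/x}^{-1}q$ and phases $\theta=H_{1/x}^{-1}p-H_{1/r}^{-1}q$ at non-root nodes; the root voltage is constant. Covariance assumption: with $\Omega_p,\Omega_q$ the covariances of $p,q$ and $\Omega_{pq}=\mathbb{E}[(p-\mathbb{E}p)(q-\mathbb{E}q)^T]=\Omega_{qp}^T$, for distinct non-root $a,b$ we have $\Omega_p(a,b)=\Omega_q(a,b)=\Omega_{qp}(a,b)=0$, and $\Omega_{qp}(a,a)\ge0$. Define $\phi_{ab}=\mathbb{E}[((v_a-\mathbb{E}v_a)-(v_b-\mathbb{E}v_b))^2]$. *)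

(* Vertices of the tree are 'I_n.+1, the root (substation) is ord0;
   non-root nodes are indexed by 'I_n via lift ord0. *)
From HB Require Import structures.
From mathcomp Require Import all_boot all_order all_algebra.
Set Implicit Arguments. Unset Strict Implicit. Unset Printing Implicit Defensive.
Import Order.TTheory GRing.Theory Num.Theory.
Local Open Scope ring_scope.

Section Defs.
Variables (R : realFieldType) (n : nat).
Notation V := 'I_n.+1.

Definition degree (E : rel V) (a : V) : nat := #|[set b | E a b]|.

Definition is_tree_on (O : {set V}) (E : rel V) : Prop :=
  [/\ symmetric E, irreflexive E,
      (forall a b, E a b -> (a \in O) && (b \in O)),
      (forall a b, a \in O -> b \in O -> connect E a b) &
      #|[set p : V * V | E p.1 p.2]| = (#|O|.-1).*2 ]%N.

Definition is_tree (E : rel V) : Prop := is_tree_on [set: V] E.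

Definition laplacian (E : rel V) (w : V -> V -> R) : 'M[R]_n.+1 :=
  \matrix_(a, b) (if a == b then \sum_(c | E a c) (w a c)^-1
                  else if E a b then - (w a b)^-1 else 0).

Definition red_laplacian (E : rel V) (w : V -> V -> R) : 'M[R]_n :=
  \matrix_(i, j) laplacian E w (lift ord0 i) (lift ord0 j).

(* Covariance matrix of the non-root voltage-magnitude deviations
   v = H_{1/r}^{-1} p + H_{1/x}^{-1} q, where Op = Cov(p), Oq = Cov(q),
   Opq = E[(p - Ep)(q - Eq)^T] and Oqp = Opq^T. *)
Definition cov_v (E : rel V) (r x : V -> V -> R) (Op Oq Opq : 'M[R]_n) : 'M[R]_n :=
  let A := invmx (red_laplacian E r) in
  let B := invmx (red_laplacian E x) in
  A *m Op *m A^T + B *m Oq *m B^T + A *m Opq *m B^T + B *m Opq^T *m A^T.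

(* covariance of the voltage deviations, extended to all nodes
   (the root voltage is constant, hence has zero covariance) *)
Definition cov_V (E : rel V) (r x : V -> V -> R) (Op Oq Opq : 'M[R]_n) (a b : V) : R :=
  match unlift ord0 a, unlift ord0 b with
  | Some i, Some j => cov_v E r x Op Oq Opq i j
  | _, _ => 0
  end.

(* phi_ab = E[((v_a - E v_a) - (v_b - E v_b))^2] *)
Definition phi (E : rel V) (r x : V -> V -> R) (Op Oq Opq : 'M[R]_n) (a b : V) : R :=
  cov_V E r x Op Oq Opq a a + cov_V E r x Op Oq Opq b b
  - 2 * cov_V E r x Op Oq Opq a b.

(* (Op, Oq, Opq) is a valid joint covariance structure of (p, q): the joint
   covariance matrix [[Op, Opq], [Opq^T, Oq]] is symmetric positive semidefinite *)
Definition joint_cov (Op Oq Opq : 'M[R]_n) : Prop :=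
  [/\ Op^T = Op, Oq^T = Oq &
      forall u w : 'cV[R]_n,
        0 <= (u^T *m Op *m u + w^T *m Oq *m w + (u^T *m Opq *m w) *+ 2) 0 0].

Definition graph_weight (F : rel V) (wt : V -> V -> R) : R :=
  \sum_(a : V) \sum_(b : V | F a b && (a < b)%N) wt a b.

Definition is_MST (O : {set V}) (wt : V -> V -> R) (F : rel V) : Prop :=
  is_tree_on O F /\
  forall F' : rel V, is_tree_on O F' -> graph_weight F wt <= graph_weight F' wt.

End Defs.

(* Root the tree at the substation. The inverse of the reduced Laplacian with
   weights 1/w has entry (a, c) equal to the w-length of the common part of the
   paths from a and from c to the root. Hence the k-th components of
   H_{1/r}^{-1} (e_a - e_b) and H_{1/x}^{-1} (e_a - e_b) are the signed r- and
   x-lengths of the part of the tree path a-b lying on the path from k to the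
   root, a part that the path a-b runs through in a single direction. As the
   injections are uncorrelated across nodes, phi_ab is a sum over k of
   quadratic forms with nonnegative coefficients in these two lengths, so phi
   strictly increases when a tree path is strictly extended. Both claims then
   follow from the exchange properties of minimum spanning trees: a tree edge
   ab between observed nodes that is missing from T_M would be lighter than the
   edge of T_M crossing the cut of T minus ab, whose tree path strictly
   contains ab; and an edge ab of T_M whose tree path passes through an
   observed node c would be heavier than both ac and cb. *)

From Pilot Require Import Defs.
From HB Require Import structures.
From mathcomp Require Import all_boot all_order all_algebra.
From mathcomp Require Import zify ring lra.
Set Implicit Arguments. Unset Strict Implicit. Unset Printing Implicit Defensive.
Import Order.TTheory GRing.Theory Num.Theory.

Section Distance.
Variables (T : finType) (G : rel T) (t : T).

Definition reaches_within (v : T) (k : nat) : bool :=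
  ~~ connect G v t || [exists p : k.-tuple T, path G v p && (last v p == t)].

Lemma reaches_within_ex v : exists k, reaches_within v k.
Proof.
rewrite /reaches_within; have [/connectP [p pp lp]|_] := boolP (connect G v t); last by exists 0.
by exists (size p); apply/existsP; exists (in_tuple p); rewrite /= pp -lp eqxx.
Qed.

(* The length of a shortest G-path from v to t; 0 when t is unreachable from v. *)
Definition gdist v := ex_minn (reaches_within_ex v).

Lemma gdist_path v : connect G v t ->
  exists2 p, path G v p & last v p = t /\ size p = gdist v.
Proof.
move=> cv; rewrite /gdist; case: ex_minnP => k.
rewrite /reaches_within cv => /existsP [p /andP [pp /eqP lp]] _.
by exists p; rewrite ?size_tuple.
Qed.

Lemma gdist_min v p : path G v p -> last v p = t -> (gdist v <= size p)%N.
Proof.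
move=> pp lp; rewrite /gdist; case: ex_minnP => k _; apply; rewrite /reaches_within.
by apply/orP; right; apply/existsP; exists (in_tuple p); rewrite /= pp lp eqxx.
Qed.

Lemma gdist_target : gdist t = 0%N.
Proof. by apply/eqP; rewrite -leqn0 (gdist_min (p := [::])). Qed.

Lemma gdist_eq0 v : connect G v t -> gdist v = 0%N -> v = t.
Proof. by move=> /gdist_path [[|? ?] _ [lp sp]] d0 //; rewrite d0 in sp. Qed.

Lemma gdist_edge v w : G v w -> connect G w t -> (gdist v <= (gdist w).+1)%N.
Proof.
move=> e /gdist_path [p pp [lp sp]].
by rewrite -sp (gdist_min (p := w :: p)) //= e pp.
Qed.

Definition next_hop v :=
  if v == t then t else odflt t [pick w | G v w && (gdist w < gdist v)%N].

Lemma next_hop_target : next_hop t = t.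
Proof. by rewrite /next_hop eqxx. Qed.

Lemma next_hopP v : connect G v t -> v != t ->
  G v (next_hop v) && (gdist (next_hop v) < gdist v)%N.
Proof.
move=> cv vt; rewrite /next_hop (negbTE vt); case: pickP => [w //|none].
have [[|w p] /= pp [lp sp]] := gdist_path cv; first by rewrite lp eqxx in vt.
case/andP: pp => e pp; move: (none w); rewrite e /= -sp ltnS.
by rewrite (gdist_min pp lp).
Qed.

End Distance.

Definition edges (T : finType) (G : rel T) := [set p : T * T | G p.1 p.2].

(* Each vertex of O but r0 contributes the two orientations of its edge to
   [next_hop G r0 v], and these are all distinct. *)
Lemma card_edges_connected_ge (T : finType) (O : {set T}) (G : rel T) :
  symmetric G -> (forall a b, a \in O -> b \in O -> connect G a b) ->
  ((#|O|.-1).*2 <= #|edges G|)%N.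
Proof.
move=> sG cG; have [->|[r0 r0O]] := set_0Vmem O; first by rewrite cards0.
pose hop := next_hop G r0.
pose f (p : T * bool) := if p.2 then (p.1, hop p.1) else (hop p.1, p.1).
have hopP v : v \in O :\ r0 -> G v (hop v) && (gdist G r0 (hop v) < gdist G r0 v)%N.
  by rewrite in_setD1 => /andP [vr vO]; apply: next_hopP => //; apply: cG.
have f_inj : {in setX (O :\ r0) [set: bool] &, injective f}.
  move=> [v b] [v' b'] /setXP [/hopP/andP [_ lt] _] /setXP [/hopP/andP [_ lt'] _].
  rewrite /f => /eqP; case: b; case: b'; rewrite /= xpair_eqE => /andP [/eqP e /eqP e'];
    rewrite ?e ?e' //; have := congr1 (gdist G r0) e; have := congr1 (gdist G r0) e'; lia.
have f_edges : [set f p | p in setX (O :\ r0) [set: bool]] \subset edges G.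
  apply/subsetP => _ /imsetP [[v b] /setXP [/hopP/andP [e _] _] ->].
  by rewrite inE /f; case: b; rewrite //= sG.
move: (subset_leq_card f_edges); rewrite (card_in_imset f_inj) cardsX cardsT card_bool.
by rewrite (cardsD1 r0 O) r0O muln2.
Qed.

Definition del_edge (T : eqType) (F : rel T) (u v : T) : rel T :=
  fun a b => F a b && ~~ (((a == u) && (b == v)) || ((a == v) && (b == u))).

Definition add_edge (T : eqType) (F : rel T) (p q : T) : rel T :=
  fun a b => F a b || ((a == p) && (b == q)) || ((a == q) && (b == p)).

Definition tree_on (T : finType) (O : {set T}) (F : rel T) :=
  [/\ symmetric F, irreflexive F,
      (forall a b, F a b -> (a \in O) && (b \in O)),
      (forall a b, a \in O -> b \in O -> connect F a b) &
      #|edges F| = (#|O|.-1).*2 ]%N.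

Lemma is_tree_onE n (O : {set 'I_n.+1}) (F : rel 'I_n.+1) : is_tree_on O F <-> tree_on O F.
Proof. by []. Qed.

Section TreeExchange.
Variables (T : finType) (O : {set T}) (F : rel T).
Implicit Types (u v w p q : T).

Lemma del_edge_sym u v : symmetric F -> symmetric (del_edge F u v).
Proof.
move=> sF a b; rewrite /del_edge sF; congr (_ && ~~ _).
by case: (a == u); case: (a == v); case: (b == u); case: (b == v).
Qed.

Lemma del_edge_sub u v : subrel (del_edge F u v) F.
Proof. by move=> a b /andP []. Qed.

Lemma card_edges_del_edge u v : symmetric F -> irreflexive F -> F u v ->
  #|edges (del_edge F u v)| = (#|edges F| - 2)%N.
Proof.
move=> sF iF e; have uv : u != v by apply: contraTneq e => ->; rewrite iF.
have -> : edges (del_edge F u v) = (edges F :\ (u, v)) :\ (v, u).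
  apply/setP => [[a b]]; rewrite !inE /del_edge /= !xpair_eqE.
  by case: (F a b); case: (a == u); case: (a == v); case: (b == u); case: (b == v).
rewrite [in RHS](cardsD1 (u, v)) inE e [in RHS](cardsD1 (v, u)) !inE xpair_eqE sF e.
by rewrite eq_sym (negbTE uv) /=; lia.
Qed.

Lemma card_edges_add_edge (H : rel T) p q : p != q -> ~~ H p q -> ~~ H q p ->
  #|edges (add_edge H p q)| = (#|edges H|).+2.
Proof.
move=> pq Hpq Hqp; have -> : edges (add_edge H p q) = (p, q) |: ((q, p) |: edges H).
  apply/setP => [[a b]]; rewrite !inE /add_edge /= !xpair_eqE.
  by case: (H a b); case: (a == p); case: (a == q); case: (b == p); case: (b == q).
by rewrite !cardsU1 !inE /= !xpair_eqE (negbTE Hpq) (negbTE Hqp) (negbTE pq) eq_sym (negbTE pq).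
Qed.

Lemma edges_add_del_edge u v : symmetric F -> F u v ->
  edges (add_edge (del_edge F u v) u v) = edges F.
Proof.
move=> sF e; apply/setP => [[a b]]; rewrite !inE /add_edge /del_edge /=.
apply/idP/idP => [|Fab].
  by case/orP => [/orP [/andP [] //|] |] /andP [/eqP -> /eqP ->]; rewrite // sF.
by case: ((a == u) && (b == v)); case: ((a == v) && (b == u)); rewrite ?Fab ?orbT.
Qed.

Hypothesis tF : tree_on O F.

Lemma tree_del_edge_disconnected u v : F u v -> ~~ connect (del_edge F u v) u v.
Proof.
case: tF => sF iF inO cF cardF e; apply/negP => cuv.
have sG := del_edge_sym u v sF.
have cG a b : a \in O -> b \in O -> connect (del_edge F u v) a b.
  move=> aO bO; apply: (connect_sub _ (cF a b aO bO)) => y z Fyz.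
  have [|uvyz] := boolP (((y == u) && (z == v)) || ((y == v) && (z == u))).
    by case/orP => /andP [/eqP -> /eqP ->]; rewrite // (sym_connect_sym sG).
  by apply: connect1; rewrite /del_edge Fyz uvyz.
have : (0 < #|edges F|)%N by apply/card_gt0P; exists (u, v); rewrite inE.
by move: (card_edges_connected_ge sG cG); rewrite card_edges_del_edge // cardF; lia.
Qed.

Lemma path_del_edge_reach u v w s : path F w s -> last w s \in [:: u; v] ->
  connect (del_edge F u v) w u || connect (del_edge F u v) w v.
Proof.
elim: s w => [|y s IH] w /=; first by rewrite !inE => _ /orP [] /eqP ->; rewrite connect0 ?orbT.
case/andP => e pp /(IH y pp); have [->|wu] := eqVneq w u; first by rewrite connect0.
have [->|wv] := eqVneq w v; first by rewrite connect0 orbT.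
have wy : del_edge F u v w y by rewrite /del_edge e (negbTE wu) (negbTE wv).
by case/orP => c; apply/orP; [left|right]; apply: connect_trans (connect1 wy) c.
Qed.

Lemma tree_del_edge_sides u v w : F u v -> w \in O ->
  connect (del_edge F u v) w u || connect (del_edge F u v) w v.
Proof.
case: tF => _ _ inO cF _ e wO; have /andP [uO _] := inO _ _ e.
by case/connectP: (cF _ _ wO uO) => s pp lp; apply: (path_del_edge_reach pp); rewrite -lp mem_head.
Qed.

Lemma tree_exchange u v p q : F u v -> p \in O -> q \in O -> p != q -> ~~ F p q ->
  connect (del_edge F u v) u p -> connect (del_edge F u v) v q ->
  tree_on O (add_edge (del_edge F u v) p q).
Proof.
case: tF => sF iF inO cF cardF e pO qO pq nFpq cup cvq.
set G := del_edge F u v; have sG : symmetric G := del_edge_sym u v sF.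
have sG' : symmetric (add_edge G p q).
  move=> a b; rewrite /add_edge sG.
  by case: (G b a); case: (a == p); case: (a == q); case: (b == p); case: (b == q).
have GG' a b : connect G a b -> connect (add_edge G p q) a b.
  by apply: connect_sub => y z Gyz; apply: connect1; rewrite /add_edge Gyz.
have nGpq : ~~ G p q by apply: contra nFpq; apply: del_edge_sub.
have nGqp : ~~ G q p by rewrite sG.
have uv : u != v by apply: contraTneq e => ->; rewrite iF.
split=> //.
- move=> a; rewrite /add_edge /G /del_edge iF /=.
  by apply/negP => /orP [] /andP [/eqP ea /eqP eb]; move: pq; rewrite -ea -eb eqxx.
- move=> a b /orP [/orP [/del_edge_sub /inO //|] |] /andP [/eqP -> /eqP ->]; exact/andP.
- have G'pq : add_edge G p q p q by rewrite /add_edge !eqxx andbT orbT.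
  have cuv : connect (add_edge G p q) u v.
    apply: connect_trans (GG' _ _ cup) (connect_trans (connect1 G'pq) (GG' _ _ _)).
    by rewrite (sym_connect_sym sG).
  move=> a b aO bO; apply: (connect_sub _ (cF a b aO bO)) => y z Fyz.
  have [Gyz|] := boolP (G y z); first by apply: connect1; rewrite /add_edge Gyz.
  rewrite /G /del_edge Fyz /= negbK => /orP [] /andP [/eqP -> /eqP ->] //.
  by rewrite (sym_connect_sym sG').
- rewrite card_edges_add_edge // -cardF -(edges_add_del_edge sF e) card_edges_add_edge //;
    by rewrite /G /del_edge !eqxx ?orbT ?andbF.
Qed.

End TreeExchange.

Lemma path_crossing_edge (T : finType) (F : rel T) (S : {pred T}) x s :
  path F x s -> uniq (x :: s) -> x \in S -> last x s \notin S ->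
  exists u v, [/\ F u v, u \in S, v \notin S,
    connect (del_edge F u v) x u & connect (del_edge F u v) v (last x s)].
Proof.
elim: s x => [|y s IH] x /=; first by move=> _ _ ->.
case/andP => e pp /andP [xs us] xS lS.
have [yS|yS] := boolP (y \in S); last first.
  exists x, y; split=> //; apply/connectP; exists s => //.
  apply: (sub_in_path (P := [pred z | z != x])) _ _ pp.
    by move=> a b /[!inE] ax bx Fab; rewrite /del_edge Fab (negbTE ax) (negbTE bx) andbF.
  by apply/allP => z zs; rewrite inE; apply: contraNneq xs => <-.
have [u [v [Fuv uS vS cyu cv]]] := IH y pp us yS lS; exists u, v; split=> //.
apply: connect_trans cyu; apply: connect1; rewrite /del_edge e /=.
have xv : x != v by apply: contraNneq vS => <-.
have yv : y != v by apply: contraNneq vS => <-.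
by rewrite (negbTE xv) (negbTE yv) !andbF.
Qed.

Lemma connect_uniq_path (T : finType) (e : rel T) x y : connect e x y ->
  exists2 p, path e x p & uniq (x :: p) /\ last x p = y.
Proof. by case/connectP => p pp ->; case: (shortenP pp) => p' pp' up' _; exists p'. Qed.

Local Open Scope ring_scope.

Section GraphWeight.
Variables (R : realFieldType) (n : nat).
Notation V := 'I_n.+1.

Lemma sum_pair_indicator (x y : V) (c : R) :
  \sum_(a : V) \sum_(b : V) (if (a == x) && (b == y) then c else 0) = c.
Proof.
rewrite (bigD1 x) //= (bigD1 y) //= !eqxx big1 => [|b /negbTE->]; last by [].
by rewrite big1 ?addr0 // => a /negbTE ->; rewrite big1.
Qed.

Lemma sum_unordered_pair (x y : V) (wt : V -> V -> R) :
  (forall a b, wt a b = wt b a) -> x != y ->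
  \sum_(a : V) \sum_(b : V)
    (if (((a == x) && (b == y)) || ((a == y) && (b == x))) && (a < b)%N then wt a b else 0)
  = wt x y.
Proof.
move=> sw xy.
transitivity (\sum_(a : V) \sum_(b : V)
   ((if (a == x) && (b == y) then (if (x < y)%N then wt x y else 0) else 0)
  + (if (a == y) && (b == x) then (if (y < x)%N then wt y x else 0) else 0))).
  apply: eq_bigr => a _; apply: eq_bigr => b _.
  case: (a =P x) => [->|]; case: (b =P y) => [->|] /=; rewrite ?(negbTE xy) ?add0r ?addr0.
  - by case: (x < y)%N.
  - by case: (x =P y) => // _; case: (b =P x) => // ->; rewrite ltnn addr0.
  - by case: (a =P y) => [->|] //; case: (y =P x) => // _; rewrite ltnn addr0.
  - by case: (a =P y) => [->|]; case: (b =P x) => [->|] //=; rewrite ?add0r; case: (y < x)%N.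
under eq_bigr do rewrite big_split /=.
rewrite big_split /= !sum_pair_indicator.
by case: ltngtP => [||/val_inj/eqP]; rewrite ?addr0 ?add0r // (negbTE xy).
Qed.

Lemma graph_weight_exchange (F : rel V) (wt : V -> V -> R) u v p q :
  symmetric F -> (forall a b, wt a b = wt b a) -> F u v -> u != v -> p != q -> ~~ F p q ->
  graph_weight (add_edge (del_edge F u v) p q) wt = graph_weight F wt - wt u v + wt p q.
Proof.
move=> sF sw e uv pq nFpq.
have gwE H : graph_weight H wt =
    \sum_(a : V) \sum_(b : V) (if H a b && (a < b)%N then wt a b else 0).
  by apply: eq_bigr => a _; rewrite big_mkcond.
rewrite !gwE -(sum_unordered_pair sw uv) -(sum_unordered_pair sw pq).
rewrite -sumrB -big_split /=; apply: eq_bigr => a _.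
rewrite -sumrB -big_split /=; apply: eq_bigr => b _.
set A := ((a == u) && (b == v)) || ((a == v) && (b == u)).
set B := ((a == p) && (b == q)) || ((a == q) && (b == p)).
have FA : A -> F a b by case/orP => /andP [/eqP -> /eqP ->]; rewrite // sF.
have FB : B -> ~~ F a b by case/orP => /andP [/eqP -> /eqP ->]; rewrite // sF.
rewrite /add_edge /del_edge -/A -orbA -/B.
move: FA FB; case: (F a b); case: A; case: B; case: (a < b)%N => //= FA FB;
  first [by have := FA isT | by have := FB isT | ring].
Qed.

Section MinimumSpanningTree.
Variables (O : {set V}) (wt : V -> V -> R) (F : rel V).
Hypotheses (wt_sym : forall a b, wt a b = wt b a) (F_MST : is_MST O wt F).

Lemma MST_exchange u v p q : F u v -> p \in O -> q \in O -> p != q -> ~~ F p q ->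
  connect (del_edge F u v) u p -> connect (del_edge F u v) v q -> wt u v <= wt p q.
Proof.
move=> e pO qO pq nFpq cup cvq; have [/is_tree_onE tF minF] := F_MST.
have [sF iF _ _ _] := tF; have uv : u != v by apply: contraTneq e => ->; rewrite iF.
have := minF _ (tree_exchange tF e pO qO pq nFpq cup cvq).
by rewrite graph_weight_exchange //; lra.
Qed.

Lemma MST_cut (S : {pred V}) a b : a \in O -> b \in O -> a \in S -> b \notin S -> ~~ F a b ->
  exists u v, [/\ F u v, u \in S, v \notin S & wt u v <= wt a b].
Proof.
move=> aO bO aS bS nFab; have [/is_tree_onE [sF _ _ cF _] _] := F_MST.
have [p pp [up lp]] := connect_uniq_path (cF a b aO bO).
have lS : last a p \notin S by rewrite lp.
have [u [v [Fuv uS vS cau cvb]]] := path_crossing_edge pp up aS lS.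
exists u, v; split=> //; rewrite lp in cvb.
apply: (MST_exchange Fuv aO bO _ nFab _ cvb).
  by apply: contraNneq bS => <-.
by rewrite (sym_connect_sym (del_edge_sym u v sF)).
Qed.

Lemma MST_edge_le a b c : F a b -> c \in O -> c != a -> c != b ->
  wt a b <= wt a c \/ wt a b <= wt c b.
Proof.
move=> Fab cO ca cb; have [/is_tree_onE tF _] := F_MST; have [sF _ inF _ _] := tF.
have /andP [aO bO] := inF _ _ Fab.
set G := del_edge F a b; have sG : symmetric G := del_edge_sym a b sF.
have nGab := tree_del_edge_disconnected tF Fab.
have Gc x : F x c -> G x c.
  by move=> Fxc; rewrite /G /del_edge Fxc (negbTE ca) (negbTE cb) !andbF.
case/orP: (tree_del_edge_sides tF Fab cO) => [cGa|cGb].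
  right; apply: (MST_exchange Fab cO bO cb) => //.
  - apply: contra nGab => Fcb; have Gcb : G c b by rewrite sG Gc // sF.
    by rewrite (sym_connect_sym sG) in cGa; apply: connect_trans cGa (connect1 Gcb).
  - by rewrite (sym_connect_sym sG).
left; apply: (MST_exchange Fab aO cO) => //; first by rewrite eq_sym.
- by apply: contra nGab => /Gc Gac; apply: connect_trans (connect1 Gac) cGb.
- by rewrite (sym_connect_sym sG).
Qed.

End MinimumSpanningTree.

End GraphWeight.

Section RootedTree.
Variables (T : finType) (E : rel T) (rt : T).
Hypothesis tE : tree_on [set: T] E.

Lemma connect_root v : connect E v rt.
Proof. by case: tE => _ _ _ cE _; apply: cE; rewrite inE. Qed.

Definition parent := next_hop E rt.
Definition depth := gdist E rt.

Lemma parent_root : parent rt = rt.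
Proof. exact: next_hop_target. Qed.

Lemma parent_edge v : v != rt -> E v (parent v).
Proof. by move=> vr; case/andP: (next_hopP (connect_root v) vr). Qed.

Lemma depth_root : depth rt = 0%N.
Proof. exact: gdist_target. Qed.

Lemma depth_eq0 v : depth v = 0%N -> v = rt.
Proof. exact: gdist_eq0 (connect_root v). Qed.

Lemma depth_parent v : v != rt -> depth v = (depth (parent v)).+1.
Proof.
move=> vr; case/andP: (next_hopP (connect_root v) vr) => e lt.
by have := gdist_edge e (connect_root _); rewrite /depth /parent in lt *; lia.
Qed.

Lemma depth_parent_pred v : depth (parent v) = (depth v).-1.
Proof.
have [->|vr] := eqVneq v rt; first by rewrite parent_root depth_root.
by rewrite (depth_parent vr).
Qed.

Lemma depth_gt0 v : (v != rt) = (0 < depth v)%N.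
Proof.
have [->|vr] := eqVneq v rt; first by rewrite depth_root.
by apply/esym; rewrite lt0n; apply: contra_neq vr => /depth_eq0.
Qed.

Lemma parent_parent_neq v : v != rt -> parent (parent v) != v.
Proof.
move=> vr; apply/eqP => ppv; have := depth_parent_pred (parent v).
by rewrite ppv (depth_parent vr); lia.
Qed.

Lemma depth_iter k v : depth (iter k parent v) = (depth v - k)%N.
Proof. by elim: k => [|k IH] /=; rewrite ?subn0 // depth_parent_pred IH; lia. Qed.

(* Otherwise every parent link survives the deletion of ab, so a and b stay
   connected through the root. *)
Lemma tree_edge_parent a b : E a b -> (b == parent a) || (a == parent b).
Proof.
move=> e; apply/negPn/negP; rewrite negb_or => /andP [ba ab].
set G := del_edge E a b.
have cG v : connect G v rt.
  elim: {v}(depth v) {-2}v (erefl (depth v)) => [|k IH] v dv.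
    by rewrite (depth_eq0 dv) connect0.
  have vr : v != rt by rewrite depth_gt0 dv.
  apply: connect_trans (IH (parent v) _); last by rewrite depth_parent_pred dv.
  apply: connect1; rewrite /G /del_edge parent_edge //=.
  by apply/negP => /orP [] /andP [/eqP ev /eqP epv]; [move: ba | move: ab];
    rewrite -epv ev eqxx.
have sG : symmetric G by apply: del_edge_sym; case: tE.
move: (tree_del_edge_disconnected tE e); rewrite -/G.
by rewrite (connect_trans (cG a)) // (sym_connect_sym sG) cG.
Qed.

Definition ancestor (c w : T) : bool :=
  (depth w <= depth c)%N && (iter (depth c - depth w) parent c == w).

Lemma iter_ancestor c w : ancestor c w -> iter (depth c - depth w) parent c = w.
Proof. by case/andP => _ /eqP. Qed.

Lemma ancestor_depth c w : ancestor c w -> (depth w <= depth c)%N.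
Proof. by case/andP. Qed.

Lemma ancestor_refl c : ancestor c c.
Proof. by rewrite /ancestor leqnn subnn eqxx. Qed.

Lemma ancestor_root c : ancestor c rt.
Proof.
rewrite /ancestor depth_root subn0 leq0n /=; apply/eqP; apply: depth_eq0.
by rewrite depth_iter subnn.
Qed.

Lemma root_ancestor w : ancestor rt w = (w == rt).
Proof.
have [->|wr] := eqVneq w rt; first exact: ancestor_refl.
apply/negbTE/negP => /ancestor_depth.
by rewrite depth_root leqn0 => /eqP /depth_eq0 /eqP; apply/negP.
Qed.

Lemma ancestor_depth_eq c w : ancestor c w -> depth w = depth c -> w = c.
Proof. by move=> h e; rewrite -(iter_ancestor h) e subnn. Qed.

Lemma ancestor_parentE a w : a != rt ->
  ancestor a w = (w == a) || ancestor (parent a) w.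
Proof.
move=> ar; have da := depth_parent ar.
have [->|wa] /= := eqVneq w a; first exact: ancestor_refl.
rewrite /ancestor da; case: (ltngtP (depth w) (depth (parent a)).+1) => h /=.
- have le : (depth w <= depth (parent a))%N by [].
  by rewrite le subSn // iterSr.
- by have -> : (depth w <= depth (parent a))%N = false by lia.
- by rewrite h subnn ltnn /=; apply/negbTE; rewrite eq_sym.
Qed.

Lemma parent_not_ancestor a : a != rt -> ~~ ancestor (parent a) a.
Proof. by move=> ar; apply/negP => /ancestor_depth; rewrite (depth_parent ar) ltnn. Qed.

Lemma ancestor_trans u w' w : ancestor u w' -> ancestor w' w -> ancestor u w.
Proof.
move=> h1 h2; have d1 := ancestor_depth h1; have d2 := ancestor_depth h2.
rewrite /ancestor (leq_trans d2 d1) /=.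
have -> : (depth u - depth w = (depth w' - depth w) + (depth u - depth w'))%N by lia.
by rewrite iterD (iter_ancestor h1) (iter_ancestor h2).
Qed.

Lemma ancestor_total c w w' : ancestor c w -> ancestor c w' -> ancestor w' w || ancestor w w'.
Proof.
wlog le_ww' : w w' / (depth w <= depth w')%N => [hwlog|] h h'.
  by case: (leqP (depth w) (depth w')) => [|/ltnW] le; [|rewrite orbC]; apply: hwlog.
apply/orP; left; rewrite /ancestor le_ww' /=; apply/eqP.
rewrite -[in RHS](iter_ancestor h) -[in X in iter _ _ X](iter_ancestor h') -iterD.
have := ancestor_depth h' => le_w'c.
by have -> : (depth w' - depth w + (depth c - depth w') = depth c - depth w)%N by lia.
Qed.

Lemma ancestor_parent c b : ancestor c b -> ancestor c (parent b).
Proof.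
move=> h; apply: ancestor_trans h _; have [->|br] := eqVneq b rt.
  by rewrite parent_root ancestor_refl.
by rewrite ancestor_parentE // ancestor_refl orbT.
Qed.

Lemma ancestor_child c a : ancestor c a -> a != c ->
  exists b, [/\ b != rt, parent b = a & ancestor c b].
Proof.
move=> h ac; have da := ancestor_depth h.
have lt : (depth a < depth c)%N.
  by rewrite ltn_neqAle da andbT; apply: contra_neq ac => /(ancestor_depth_eq h).
have db : depth (iter (depth c - depth a).-1 parent c) = (depth a).+1.
  by rewrite depth_iter; lia.
exists (iter (depth c - depth a).-1 parent c); split.
- by rewrite depth_gt0 db.
- by rewrite -iterS prednK ?subn_gt0 // iter_ancestor.
- by rewrite /ancestor db lt /= subnS.
Qed.

Lemma ancestor_parent_inj c b b' : ancestor c b -> ancestor c b' ->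
  b != rt -> b' != rt -> parent b = parent b' -> b = b'.
Proof.
move=> h h' br br' e; have d : depth b = depth b'.
  by rewrite (depth_parent br) (depth_parent br') e.
by rewrite -(iter_ancestor h) -(iter_ancestor h') d.
Qed.

End RootedTree.

Lemma sum_mul_indicator (R : pzSemiRingType) (I : finType) (P : pred I) (f : I -> R) a :
  \sum_(i | P i) f i * (i == a)%:R = if P a then f a else 0.
Proof.
rewrite big_mkcond (bigD1 a) //= eqxx mulr1 big1 ?addr0 // => i /negbTE ia.
by rewrite ia mulr0; case: (P i).
Qed.

Lemma mulmx_diag_trmx (R : pzSemiRingType) m n p (X : 'M[R]_(m, n)) (Y : 'M[R]_n)
    (Z : 'M[R]_(p, n)) i j :
  (forall k l, k != l -> Y k l = 0) ->
  (X *m Y *m Z^T) i j = \sum_k X i k * Y k k * Z j k.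
Proof.
move=> Ydiag; rewrite mxE; apply: eq_bigr => k _; rewrite !mxE (bigD1 k) //= big1 ?addr0 //.
by move=> l lk; rewrite Ydiag ?mulr0.
Qed.

Section LaplacianInverse.
Variables (R : realFieldType) (n : nat) (E : rel 'I_n.+1).
Notation V := 'I_n.+1.
Notation root := (ord0 : V).
Notation parent := (parent E root).
Notation ancestor := (ancestor E root).
Hypothesis tE : tree_on [set: V] E.

(* The rho-length of the common part of the root paths of a and c, where rho w
   is the length of the edge (w, parent w). *)
Definition common_path_weight (rho : V -> R) (a c : V) : R :=
  \sum_(w | (w != root) && ancestor c w) rho w * (ancestor a w)%:R.

Lemma common_path_weight_root rho c : common_path_weight rho root c = 0.
Proof. by apply: big1 => w /andP [wr _]; rewrite (root_ancestor root tE) (negbTE wr) mulr0. Qed.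

Lemma common_path_weight_parent rho (a c : V) : a != root ->
  common_path_weight rho a c - common_path_weight rho (parent a) c =
  if ancestor c a then rho a else 0.
Proof.
move=> ar; rewrite /common_path_weight -sumrB.
have anc_diff w : (ancestor a w)%:R - (ancestor (parent a) w)%:R = (w == a)%:R :> R.
  rewrite (ancestor_parentE tE w ar); have [->|] /= := eqVneq w a; last by rewrite subrr.
  by rewrite (negbTE (parent_not_ancestor tE ar)) subr0.
by under eq_bigr do rewrite -mulrBr anc_diff; rewrite sum_mul_indicator ar.
Qed.

Variables (wr : V -> V -> R).
Hypothesis wr_sym : forall a b, wr a b = wr b a.
Hypothesis wr_gt0 : forall a b, E a b -> 0 < wr a b.

Definition parent_weight (w : V) := wr w (parent w).

Lemma parent_weight_gt0 w : w != root -> 0 < parent_weight w.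
Proof. by move=> wr0; apply/wr_gt0/parent_edge. Qed.

Lemma laplacian_edge_term (a b c : V) : a != root -> E a b ->
  (wr a b)^-1 * (common_path_weight parent_weight a c - common_path_weight parent_weight b c)
  = if b == parent a then (ancestor c a)%:R else - (ancestor c b)%:R.
Proof.
move=> ar e; have wr_neq0 : wr a b != 0 by rewrite gt_eqF ?wr_gt0.
have [ba|bpa] := eqVneq b (parent a).
  rewrite ba common_path_weight_parent //; case: (ancestor c a); last by rewrite mulr0.
  by rewrite /parent_weight -ba mulVf.
have := tree_edge_parent root tE e; rewrite (negbTE bpa) => /eqP ab.
have br : b != root by apply: contra_neq ar => bre; rewrite ab bre parent_root.
have := common_path_weight_parent parent_weight c br; rewrite -ab => cpw_ba.
rewrite -opprB cpw_ba; case: (ancestor c b); last by rewrite oppr0 mulr0.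
have wba : parent_weight b = wr a b by rewrite /parent_weight -ab wr_sym.
by rewrite wba mulrN mulVf.
Qed.

Lemma sum_children_ancestor (a c : V) : a != root ->
  \sum_(b | E a b && (b != parent a)) (ancestor c b)%:R = (ancestor c a && (a != c))%:R :> R.
Proof.
move=> ar.
have childE (b : V) : (E a b && (b != parent a) && ancestor c b) =
                [&& b != root, parent b == a & ancestor c b].
  apply/idP/idP.
  - case/andP => /andP [e bpa] cb; have := tree_edge_parent root tE e; rewrite (negbTE bpa) /=.
    move=> /eqP ab; have br : b != root by apply: contra_neq ar => bre; rewrite ab bre parent_root.
    by rewrite br -ab eqxx.
  - case/and3P => br /eqP pb ->; rewrite andbT -pb.
    have [sE _ _ _ _] := tE.
    by rewrite sE parent_edge //= eq_sym parent_parent_neq.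
rewrite big_mkcond /= (eq_bigr (fun b => [&& b != root, parent b == a & ancestor c b]%:R));
  last by move=> b _; rewrite -childE; case: (E a b && _); case: (ancestor c b).
have [/andP [ca ac] | nca] := boolP (ancestor c a && (a != c)).
  have [b0 [b0r pb0 cb0]] := ancestor_child tE ca ac.
  rewrite (eq_bigr (fun b => 1 * (b == b0)%:R)) ?sum_mul_indicator // => b _.
  rewrite mul1r; have [->|bb0] := eqVneq b b0; first by rewrite b0r pb0 eqxx cb0.
  case: and3P => // -[br /eqP pb cb]; case/eqP: bb0.
  by apply: (ancestor_parent_inj tE cb cb0 br b0r); rewrite pb pb0.
apply: big1 => b _; case: and3P => // -[br /eqP pb cb].
move: nca; rewrite -pb (ancestor_parent tE cb) /=; case: eqP => // cpb _.
by move: (ancestor_depth cb); rewrite (depth_parent tE br) cpb ltnn.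
Qed.

Lemma laplacian_mul_common_path_weight (a c : V) : a != root ->
  \sum_b laplacian E wr a b * common_path_weight parent_weight b c = (a == c)%:R.
Proof.
move=> ar; set G := common_path_weight parent_weight; have [_ iE _ _ _] := tE.
have -> : \sum_b laplacian E wr a b * G b c = \sum_(b | E a b) (wr a b)^-1 * (G a c - G b c).
  rewrite (bigD1 a) //= mxE eqxx big_distrl /=.
  under [RHS]eq_bigr do rewrite mulrBr.
  rewrite sumrB; congr (_ + _); rewrite -sumrN big_mkcond [RHS]big_mkcond /=.
  apply: eq_bigr => b _; have [->|ba] := eqVneq b a; first by rewrite iE.
  by rewrite mxE ifN_eqC //; case: (E a b); rewrite ?mulNr ?mul0r.
rewrite (bigD1 (parent a)) ?parent_edge //= laplacian_edge_term ?parent_edge // eqxx.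
rewrite (eq_bigr (fun b => - (ancestor c b)%:R)); last first.
  by move=> b /andP [e bpa]; rewrite laplacian_edge_term // (negbTE bpa).
rewrite sumrN sum_children_ancestor //.
by have [->|ac] := eqVneq a c; rewrite ?ancestor_refl ?subr0 // andbT subrr.
Qed.

End LaplacianInverse.

Lemma ler_ltr_sum (R : numDomainType) (I : finType) (P : pred I) (F G : I -> R) i0 :
  P i0 -> F i0 < G i0 -> (forall i, P i -> F i <= G i) ->
  \sum_(i | P i) F i < \sum_(i | P i) G i.
Proof.
move=> Pi0 lt0 le; rewrite (bigD1 i0) //= [X in _ < X](bigD1 i0) //=.
by apply: ltr_leD => //; apply: ler_sum => i /andP [Pi _]; apply: le.
Qed.

Definition quad_form (R : pzRingType) (a b c X Y : R) :=
  a * X ^+ 2 + b * Y ^+ 2 + 2 * c * (X * Y).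

Lemma quad_formZ (R : comPzRingType) (a b c sg X Y : R) : sg * sg = 1 ->
  quad_form a b c (sg * X) (sg * Y) = quad_form a b c X Y.
Proof.
move=> sg2; have sgM (Z W : R) : (sg * Z) * (sg * W) = Z * W by rewrite mulrACA sg2 mul1r.
by rewrite /quad_form !expr2 !sgM.
Qed.

Section QuadFormMonotone.
Variables (R : realDomainType) (a b c X Y X' Y' : R).
Hypotheses (a_ge0 : 0 <= a) (b_ge0 : 0 <= b) (c_ge0 : 0 <= c).
Hypotheses (X'_ge0 : 0 <= X') (Y'_ge0 : 0 <= Y').

Lemma quad_form_le : X' <= X -> Y' <= Y -> quad_form a b c X' Y' <= quad_form a b c X Y.
Proof.
move=> leX leY; have X_ge0 := le_trans X'_ge0 leX; have Y_ge0 := le_trans Y'_ge0 leY.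
rewrite /quad_form !expr2; apply: lerD; first apply: lerD; apply: ler_wpM2l;
  rewrite ?mulr_ge0 //; exact: ler_pM.
Qed.

Lemma quad_form_lt : 0 < a + b -> X' < X -> Y' < Y ->
  quad_form a b c X' Y' < quad_form a b c X Y.
Proof.
move=> ab_gt0 ltX ltY; have X_ge0 := le_trans X'_ge0 (ltW ltX).
have Y_ge0 := le_trans Y'_ge0 (ltW ltY).
have ltX2 : X' * X' < X * X by apply: ltr_pM.
have ltY2 : Y' * Y' < Y * Y by apply: ltr_pM.
have leXY : X' * Y' <= X * Y by apply: ler_pM => //; apply: ltW.
rewrite /quad_form !expr2; apply: ltr_leD; last by apply: ler_wpM2l; rewrite ?mulr_ge0.
have [a0|a_neq0] := eqVneq a 0.
  by move: ab_gt0; rewrite a0 add0r => b_gt0; rewrite !mul0r !add0r ltr_pM2l.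
apply: ltr_leD; last exact: ler_wpM2l (ltW ltY2).
by rewrite ltr_pM2l // lt_def a_neq0.
Qed.

End QuadFormMonotone.

Section VoltageVariance.
Variables (R : realFieldType) (n : nat) (E : rel 'I_n.+1).
Notation V := 'I_n.+1.
Notation root := (ord0 : V).
Notation ancestor := (ancestor E root).
Hypothesis tE : tree_on [set: V] E.

Definition green (wr : V -> V -> R) (a : V) (k : 'I_n) : R :=
  common_path_weight E (parent_weight E wr) a (lift ord0 k).

Lemma green_root wr k : green wr root k = 0.
Proof. exact: common_path_weight_root. Qed.

Lemma invmx_red_laplacian (wr : V -> V -> R) :
  (forall a b, wr a b = wr b a) -> (forall a b, E a b -> 0 < wr a b) ->
  invmx (red_laplacian E wr) = \matrix_(i, k) green wr (lift ord0 i) k.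
Proof.
move=> wr_sym wr_gt0; set G := \matrix_(i, k) _.
have LG : red_laplacian E wr *m G = 1%:M.
  apply/matrixP => i j; rewrite !mxE.
  transitivity (\sum_b laplacian E wr (lift ord0 i) b *
                 common_path_weight E (parent_weight E wr) b (lift ord0 j)).
    rewrite big_ord_recl common_path_weight_root // mulr0 add0r.
    by apply: eq_bigr => k _; rewrite !mxE.
  by rewrite laplacian_mul_common_path_weight // eq_sym neq_lift.
have [Lunit _] := mulmx1_unit LG.
by rewrite -[invmx _]mulmx1 -LG mulmxA mulVmx // mul1mx.
Qed.

(* The sign of the edge (w, parent w) on the tree path from u to v
   (0 when that edge is not on the path). *)
Definition path_sign (u v w : V) : R := (ancestor u w)%:R - (ancestor v w)%:R.

Lemma path_sign_root u v : path_sign u v root = 0.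
Proof. by rewrite /path_sign !(ancestor_root root tE) subrr. Qed.

Lemma green_sub wr u v k : green wr u k - green wr v k =
  \sum_(w | (w != root) && ancestor (lift ord0 k) w) parent_weight E wr w * path_sign u v w.
Proof. by rewrite /green /common_path_weight -sumrB; apply: eq_bigr => w _; rewrite mulrBr. Qed.

(* A path meets the path from c to the root in a segment that it runs through
   in a single direction. *)
Lemma path_sign_constant u v c :
  exists2 sg : R, sg * sg = 1 & forall w, ancestor c w -> 0 <= sg * path_sign u v w.
Proof.
have [w1 /and3P [cw1 uw1 vw1] | none] :=
  pickP [pred w | [&& ancestor c w, ~~ ancestor u w & ancestor v w]].
  exists (-1); first by rewrite mulrNN mulr1.
  move=> w cw; have : ~~ (ancestor u w && ~~ ancestor v w).
    apply/negP => /andP [uw vw]; case/orP: (ancestor_total cw1 cw) => w1w.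
      by move: uw1; rewrite (ancestor_trans uw w1w).
    by move: vw; rewrite (ancestor_trans vw1 w1w).
  by rewrite /path_sign; case: (ancestor u w); case: (ancestor v w) => //= _; lra.
exists 1; first by rewrite mulr1.
move=> w cw; move: (none w); rewrite /= cw /path_sign.
by case: (ancestor u w); case: (ancestor v w) => //= _; lra.
Qed.

Section SignedGreenBounds.
Variables (wr : V -> V -> R) (sg : R) (k : 'I_n) (u v u' v' : V).
Hypothesis wr_gt0 : forall a b, E a b -> 0 < wr a b.
Hypothesis signs_le : forall w, ancestor (lift ord0 k) w ->
  0 <= sg * path_sign u' v' w <= sg * path_sign u v w.

Let parent_weight_ge0 w : w != root -> 0 <= parent_weight E wr w.
Proof. by move=> /(parent_weight_gt0 tE wr_gt0) /ltW. Qed.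

Lemma green_sub_le :
  0 <= sg * (green wr u' k - green wr v' k) <= sg * (green wr u k - green wr v k).
Proof.
rewrite !green_sub !mulr_sumr; apply/andP; split.
  apply: sumr_ge0 => w /andP [wr0 cw]; rewrite mulrCA.
  by apply: mulr_ge0 (parent_weight_ge0 wr0) _; case/andP: (signs_le cw).
apply: ler_sum => w /andP [wr0 cw]; rewrite !(mulrCA sg (parent_weight E wr w)).
by apply: (ler_wpM2l (parent_weight_ge0 wr0)); case/andP: (signs_le cw).
Qed.

Lemma green_sub_lt w0 : w0 != root -> ancestor (lift ord0 k) w0 ->
  sg * path_sign u' v' w0 < sg * path_sign u v w0 ->
  sg * (green wr u' k - green wr v' k) < sg * (green wr u k - green wr v k).
Proof.
move=> w0r cw0 lt0; rewrite !green_sub !mulr_sumr; apply: (ler_ltr_sum (i0 := w0)).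
- by rewrite w0r cw0.
- by rewrite !(mulrCA sg (parent_weight E wr w0)) ltr_pM2l ?(parent_weight_gt0 tE wr_gt0).
move=> w /andP [wr0 cw]; rewrite !(mulrCA sg (parent_weight E wr w)).
by apply: (ler_wpM2l (parent_weight_ge0 wr0)); case/andP: (signs_le cw).
Qed.

End SignedGreenBounds.

End VoltageVariance.

Section PathSigns.
Variables (R : realFieldType) (n : nat) (E : rel 'I_n.+1).
Notation V := 'I_n.+1.
Notation root := (ord0 : V).
Notation parent := (parent E root).
Notation path_sign := (path_sign R E).
Hypothesis tE : tree_on [set: V] E.

Lemma path_sign_trans x y z w : path_sign x z w = path_sign x y w + path_sign y z w.
Proof. by rewrite /path_sign; ring. Qed.

(* A tree edge {x, y} is identified with its endpoint farther from the root. *)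
Definition edge_child (x y : V) := if y == parent x then x else y.

Definition path_edges (x : V) (p : seq V) := pairmap edge_child x p.

Lemma path_sign_edge x y w : E x y -> (path_sign x y w != 0) = (w == edge_child x y).
Proof.
move=> e; have [_ iE _ _ _] := tE; rewrite /path_sign /edge_child.
have [ypx|ypx] := eqVneq y (parent x).
  have xr : x != root by apply: contraTneq e => xr; rewrite ypx xr parent_root iE.
  rewrite ypx (ancestor_parentE tE w xr); have [->|] //= := eqVneq w x.
    by rewrite (negbTE (parent_not_ancestor tE xr)) subr0 oner_eq0.
  by rewrite subrr eqxx.
have := tree_edge_parent root tE e; rewrite (negbTE ypx) => /eqP xpy.
have yr : y != root by apply: contraTneq e => yr; rewrite xpy yr parent_root iE.
rewrite xpy (ancestor_parentE tE w yr); have [->|] //= := eqVneq w y.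
  by rewrite (negbTE (parent_not_ancestor tE yr)) sub0r oppr_eq0 oner_eq0.
by rewrite subrr eqxx.
Qed.

Lemma path_sign_neq0_path_edges x p w : path E x p ->
  path_sign x (last x p) w != 0 -> w \in path_edges x p.
Proof.
elim: p x => [|y p IH] x /=; first by rewrite /path_sign subrr eqxx.
case/andP => e pp; rewrite (path_sign_trans _ y) inE.
have [//|wxy] /= := eqVneq w (edge_child x y).
have /eqP -> : path_sign x y w == 0 by apply: contraNT wxy; rewrite path_sign_edge.
by rewrite add0r; apply: IH.
Qed.

Lemma mem_path_edges x p w : w \in path_edges x p -> w \in x :: p.
Proof.
elim: p x => [|y p IH] x //=; rewrite inE => /orP [/eqP ->|/IH wyp]; last first.
  by rewrite in_cons wyp orbT.
by rewrite /edge_child; case: ifP; rewrite !inE eqxx ?orbT.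
Qed.

Lemma path_edges_path_sign_neq0 x p w : path E x p -> uniq (path_edges x p) ->
  w \in path_edges x p -> path_sign x (last x p) w != 0.
Proof.
elim: p x => [|y p IH] x //=; case/andP => e pp /andP [xyp up].
rewrite inE (path_sign_trans _ y); have [->|wxy] /= := eqVneq w (edge_child x y).
  have -> : path_sign y (last y p) (edge_child x y) = 0.
    by apply/eqP; apply: contraNT xyp; apply: path_sign_neq0_path_edges.
  by rewrite addr0 path_sign_edge.
have /eqP -> : path_sign x y w == 0 by apply: contraNT wxy; rewrite path_sign_edge.
by rewrite add0r; apply: IH.
Qed.

(* Consecutive edges of a path without repeated vertices cannot both be
   identified with the middle vertex, which has a single parent. *)
Lemma uniq_path_edges x p : path E x p -> uniq (x :: p) -> uniq (path_edges x p).
Proof.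
elim: p x => [|y p IH] x //=; case/andP => e pp /andP [xp up].
rewrite (IH y pp up) andbT /edge_child.
have [ypx|ypx] := eqVneq y (parent x).
  by apply: contra xp => /mem_path_edges; rewrite inE.
have := tree_edge_parent root tE e; rewrite (negbTE ypx) => /eqP xpy.
case: p pp up xp {IH} => [|z p] //= /andP [_ pp] /andP [yp up] xp.
rewrite inE negb_or; apply/andP; split; last by apply: contra yp => /mem_path_edges; rewrite inE.
rewrite /edge_child; have [zpy|_] := eqVneq z (parent y).
  by move: xp; rewrite xpy -zpy !inE eqxx orbT.
by apply: contra yp => /eqP <-; rewrite inE eqxx.
Qed.

Lemma path_sign_subpath u q1 q2 q3 :
  path E u (q1 ++ q2 ++ q3) -> uniq (u :: q1 ++ q2 ++ q3) -> q1 ++ q3 != [::] ->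
  let u' := last u q1 in let v' := last u' q2 in let v := last v' q3 in
  (forall w, path_sign u' v' w != 0 -> path_sign u' v' w = path_sign u v w) /\
  (exists w0, path_sign u v w0 != 0 /\ path_sign u' v' w0 = 0).
Proof.
move=> pp up ne u' v' v; have ue := uniq_path_edges pp up.
rewrite /path_edges !pairmap_cat -/u' -/v' in ue.
move: pp; rewrite !cat_path -/u' -/v' => /and3P [p1 p2 p3].
have signE w : path_sign u v w = path_sign u u' w + path_sign u' v' w + path_sign v' v w.
  by rewrite -!path_sign_trans.
have off x p w : path E x p -> w \notin path_edges x p -> path_sign x (last x p) w = 0.
  by move=> px; apply: contraNeq; apply: path_sign_neq0_path_edges.
move: ue; rewrite !cat_uniq !has_cat !negb_or => /and5P [ue1 /andP [d12 d13] _ d23 ue3].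
have notin (s1 s2 : seq V) w : ~~ has (mem s1) s2 -> w \in s2 -> w \notin s1.
  by move=> d w2; apply: contra d => w1; apply/hasP; exists w.
have notin' (s1 s2 : seq V) w : ~~ has (mem s1) s2 -> w \in s1 -> w \notin s2.
  by move=> d; apply: contraL; apply: notin d.
split=> [w s'w|].
  have w2 := path_sign_neq0_path_edges p2 s'w.
  by rewrite signE (off _ _ _ p1 (notin _ _ _ d12 w2)) (off _ _ _ p3 (notin' _ _ _ d23 w2))
    add0r addr0.
have [w0 w0in] : exists w0, w0 \in path_edges u q1 ++ path_edges v' q3.
  case: (path_edges u q1 ++ path_edges v' q3) (size_cat (path_edges u q1) (path_edges v' q3))
    => [|w0 s] sz; last by exists w0; rewrite mem_head.
  by move: ne sz; rewrite -size_eq0 size_cat /path_edges !size_pairmap => /negPf ne0 /esym/eqP;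
    rewrite ne0.
exists w0; move: w0in; rewrite mem_cat => /orP [w1|w3]; split.
- rewrite signE (off _ _ _ p2 (notin' _ _ _ d12 w1)) (off _ _ _ p3 (notin' _ _ _ d13 w1)) !addr0.
  exact: path_edges_path_sign_neq0 p1 ue1 w1.
- exact: off _ _ _ p2 (notin' _ _ _ d12 w1).
- rewrite signE (off _ _ _ p1 (notin _ _ _ d13 w3)) (off _ _ _ p2 (notin _ _ _ d23 w3)) !add0r.
  exact: path_edges_path_sign_neq0 p3 ue3 w3.
- exact: off _ _ _ p2 (notin _ _ _ d23 w3).
Qed.

End PathSigns.

Lemma joint_cov_diag_ge0 (R : realFieldType) n (Op Oq Opq : 'M[R]_n) k :
  (forall i j, i != j -> [/\ Op i j = 0, Oq i j = 0 & Opq i j = 0]) ->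
  joint_cov Op Oq Opq -> 0 <= Op k k /\ 0 <= Oq k k.
Proof.
move=> Odiag [_ _ Opsd]; pose e : 'cV[R]_n := \col_i (i == k)%:R.
have quad_e (Y : 'M[R]_n) : (forall i j, i != j -> Y i j = 0) -> (e^T *m Y *m e) 0 0 = Y k k.
  move=> Ydiag; rewrite -[e in X in X 0 0]trmxK mulmx_diag_trmx // (bigD1 k) //= big1.
    by rewrite !mxE eqxx mulr1 mul1r addr0.
  by move=> l lk; rewrite !mxE (negbTE lk) mul0r mulr0.
split.
  move: (Opsd e 0); rewrite ?mulmx0 ?trmx0 ?mul0mx ?mul0rn ?addr0 quad_e //.
  by move=> i j /Odiag [].
move: (Opsd 0 e); rewrite ?mulmx0 ?trmx0 ?mul0mx ?mul0rn ?addr0 ?add0r quad_e //.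
by move=> i j /Odiag [].
Qed.

Section Phi.
Variables (R : realFieldType) (n : nat) (E : rel 'I_n.+1).
Notation V := 'I_n.+1.
Notation root := (ord0 : V).
Notation ancestor := (ancestor E root).
Notation green := (green E).
Notation path_sign := (path_sign R E).
Variables (r x : V -> V -> R) (Op Oq Opq : 'M[R]_n).
Hypothesis tE : tree_on [set: V] E.
Hypotheses (r_sym : forall a b, r a b = r b a) (x_sym : forall a b, x a b = x b a).
Hypotheses (r_gt0 : forall a b, E a b -> 0 < r a b) (x_gt0 : forall a b, E a b -> 0 < x a b).
Hypothesis Odiag : forall i j : 'I_n, i != j -> [/\ Op i j = 0, Oq i j = 0 & Opq i j = 0].

Notation phi := (phi E r x Op Oq Opq).

Lemma cov_V_sum a b : cov_V E r x Op Oq Opq a b =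
  \sum_k (green r a k * green r b k * Op k k + green x a k * green x b k * Oq k k
        + green r a k * green x b k * Opq k k + green x a k * green r b k * Opq k k).
Proof.
have [i ->|->] := unliftP ord0 a; last first.
  by rewrite /cov_V unlift_none; symmetry; apply: big1 => k _; rewrite !(green_root tE); ring.
have [j ->|->] := unliftP ord0 b; last first.
  rewrite /cov_V unlift_none; case: (unlift _ _) => [?|]; symmetry;
  by apply: big1 => k _; rewrite !(green_root tE); ring.
rewrite /cov_V !liftK /cov_v /= (invmx_red_laplacian tE r_sym r_gt0).
have addE (A B : 'M[R]_n) : (A + B) i j = A i j + B i j by rewrite mxE.
rewrite (invmx_red_laplacian tE x_sym x_gt0) !addE !mulmx_diag_trmx;
  do ?by move=> k l /Odiag [].
  by rewrite -!big_split /=; apply: eq_bigr => k _; rewrite !mxE; ring.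
by move=> k l lk; rewrite mxE; have [] := Odiag (_ : l != k); rewrite // eq_sym.
Qed.

Lemma phi_sum a b : phi a b = \sum_k
  quad_form (Op k k) (Oq k k) (Opq k k) (green r a k - green r b k) (green x a k - green x b k).
Proof.
rewrite /Defs.phi !cov_V_sum mulr_sumr -big_split -sumrB /=.
by apply: eq_bigr => k _; rewrite /quad_form; ring.
Qed.

Lemma phi_sym a b : phi a b = phi b a.
Proof. by rewrite !phi_sum; apply: eq_bigr => k _; rewrite /quad_form; ring. Qed.

Hypotheses (Op_ge0 : forall k, 0 <= Op k k) (Oq_ge0 : forall k, 0 <= Oq k k).
Hypotheses (Opq_ge0 : forall k, 0 <= Opq k k) (OpOq_gt0 : forall k, 0 < Op k k + Oq k k).

Lemma phi_lt_path_sign u v u' v' :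
  (forall w, path_sign u' v' w != 0 -> path_sign u' v' w = path_sign u v w) ->
  (exists w0, path_sign u v w0 != 0 /\ path_sign u' v' w0 = 0) ->
  phi u' v' < phi u v.
Proof.
move=> sub [w0 [s0 s'0]].
have w0r : w0 != root by apply: contraNneq s0 => ->; rewrite (path_sign_root R tE).
have [k0 w0E|w0E] := unliftP root w0; last by rewrite w0E eqxx in w0r.
have signed k : exists2 sg : R, sg * sg = 1 & forall w, ancestor (lift ord0 k) w ->
    0 <= sg * path_sign u' v' w <= sg * path_sign u v w.
  have [sg sg2 sg_ge0] := path_sign_constant R E u v (lift ord0 k); exists sg => // w cw.
  have [s'w0|/sub ->] := eqVneq (path_sign u' v' w) 0; last by rewrite lexx sg_ge0.
  by rewrite s'w0 mulr0 lexx sg_ge0.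
rewrite !phi_sum; apply: (ler_ltr_sum (i0 := k0)) => // [|k _].
  have [sg sg2 signs] := signed k0.
  have cw0 : ancestor (lift ord0 k0) w0 by rewrite -w0E ancestor_refl.
  have lt0 : sg * path_sign u' v' w0 < sg * path_sign u v w0.
    have := signs _ cw0; rewrite s'0 mulr0 => /andP [_ s_ge0].
    rewrite lt_def s_ge0 andbT mulf_neq0 //.
    by apply: contra_eq_neq sg2 => ->; rewrite mul0r eq_sym oner_neq0.
  rewrite -[X in X < _](quad_formZ _ _ _ _ _ sg2) -[X in _ < X](quad_formZ _ _ _ _ _ sg2).
  have [r_ge0 _] := andP (green_sub_le tE r_gt0 signs).
  have [x_ge0 _] := andP (green_sub_le tE x_gt0 signs).
  by apply: quad_form_lt => //; apply: green_sub_lt cw0 lt0.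
have [sg sg2 signs] := signed k.
rewrite -[X in X <= _](quad_formZ _ _ _ _ _ sg2) -[X in _ <= X](quad_formZ _ _ _ _ _ sg2).
have [r_ge0 r_le] := andP (green_sub_le tE r_gt0 signs).
have [x_ge0 x_le] := andP (green_sub_le tE x_gt0 signs).
exact: quad_form_le.
Qed.

Lemma phi_lt_subpath u q1 q2 q3 :
  path E u (q1 ++ q2 ++ q3) -> uniq (u :: q1 ++ q2 ++ q3) -> q1 ++ q3 != [::] ->
  phi (last u q1) (last (last u q1) q2) < phi u (last (last (last u q1) q2) q3).
Proof. by move=> pp up ne; have [] := path_sign_subpath R tE pp up ne; apply: phi_lt_path_sign. Qed.

End Phi.

Section TreeMonotoneMST.
Variables (R : realFieldType) (n : nat) (E : rel 'I_n.+1) (wt : 'I_n.+1 -> 'I_n.+1 -> R).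
Notation V := 'I_n.+1.
Variables (M : {set V}) (TM : rel V).
Hypothesis tE : tree_on [set: V] E.
Hypothesis wt_sym : forall a b, wt a b = wt b a.
Hypothesis wt_lt_subpath : forall u q1 q2 q3,
  path E u (q1 ++ q2 ++ q3) -> uniq (u :: q1 ++ q2 ++ q3) -> q1 ++ q3 != [::] ->
  wt (last u q1) (last (last u q1) q2) < wt u (last (last (last u q1) q2) q3).
Hypothesis TM_MST : is_MST (~: M) wt TM.

Lemma wt_lt_across_tree_edge a b u v : E a b ->
  connect (del_edge E a b) u a -> connect (del_edge E a b) b v -> (u != a) || (v != b) ->
  wt a b < wt u v.
Proof.
move=> Eab cua cbv uv_ab; have [sE _ _ _ _] := tE; set G := del_edge E a b.
have sG : symmetric G := del_edge_sym a b sE.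
have nGab := tree_del_edge_disconnected tE Eab.
have [p1 pp1 [up1 lp1]] := connect_uniq_path cua.
have [p3 pp3 [up3 lp3]] := connect_uniq_path cbv.
have GE : subrel G E by apply: del_edge_sub.
have := @wt_lt_subpath u p1 [:: b] p3; rewrite lp1 [last a _]/= lp3; apply.
- by rewrite cat_path (sub_path GE pp1) lp1 /= Eab (sub_path GE pp3).
- rewrite (_ : u :: _ = (u :: p1) ++ b :: p3) // cat_uniq up1 up3 andbT.
  apply/hasPn => z /(path_connect pp3) cbz; apply/negP => /(path_connect pp1) cuz.
  apply: (negP nGab); rewrite (sym_connect_sym sG) in cuz cbz.
  by rewrite (sym_connect_sym sG) (connect_trans cbz) // (connect_trans cuz).
- case: p1 lp1 {pp1 up1} => [/= ua|//]; case: p3 lp3 {pp3 up3} => [/= bv|//].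
  by move: uv_ab; rewrite ua bv !eqxx.
Qed.

Lemma tree_edge_in_MST a b : a \notin M -> b \notin M -> E a b -> TM a b.
Proof.
move=> aM bM Eab; apply/negPn/negP => nTab; have [sE _ _ _ _] := tE.
set G := del_edge E a b; have sG : symmetric G := del_edge_sym a b sE.
pose S := [pred w | connect G a w].
have [aO bO] : a \in ~: M /\ b \in ~: M by rewrite !inE aM bM.
have [aS bS] : a \in S /\ b \notin S by rewrite !inE connect0 (tree_del_edge_disconnected tE Eab).
have [u [v [Tuv uS vS le_uv]]] := MST_cut wt_sym TM_MST aO bO aS bS nTab.
have cbv : connect G b v.
  case/orP: (tree_del_edge_sides tE Eab (in_setT v)) => cv; last by rewrite (sym_connect_sym sG).
  by move: vS; rewrite inE (sym_connect_sym sG) cv.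
have cua : connect G u a by rewrite (sym_connect_sym sG).
have uv_ab : (u != a) || (v != b).
  by apply: contraNT nTab; rewrite negb_or !negbK => /andP [/eqP <- /eqP <-].
by have := lt_le_trans (wt_lt_across_tree_edge Eab cua cbv uv_ab) le_uv; rewrite ltxx.
Qed.

Lemma MST_edge_tree_path a b : TM a b ->
  exists s, [/\ path E a (rcons s b), uniq (a :: rcons s b) & all (mem M) s].
Proof.
move=> Tab; have [/is_tree_onE [_ iTM _ _ _] _] := TM_MST; have [_ _ _ cE _] := tE.
have [p pp [up lp]] := connect_uniq_path (cE a b (in_setT a) (in_setT b)).
have ab : a != b by apply: contraTneq Tab => ->; rewrite iTM.
case/lastP: p pp up lp => [|s y] pp up; first by move=> /= ba; rewrite ba eqxx in ab.
rewrite last_rcons => yb; subst y; exists s; split=> //.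
apply/allP => c cs; apply/negPn/negP => cM; have cO : c \in ~: M by rewrite inE.
have [aNs bNs] : a \notin rcons s b /\ b \notin s.
  by move: up; rewrite cons_uniq rcons_uniq => /and3P [].
have ca : c != a by apply: contraNneq aNs => <-; rewrite mem_rcons inE cs orbT.
have cb : c != b by apply: contraNneq bNs => <-.
case: (splitPr cs) pp up => s1 s2; rewrite -cat_rcons rcons_cat => pp up.
have lt_ac : wt a c < wt a b.
  have := @wt_lt_subpath a [::] (rcons s1 c) (rcons s2 b); rewrite /= !last_rcons; apply=> //.
  by rewrite -size_eq0 size_rcons.
have lt_cb : wt c b < wt a b.
  have := @wt_lt_subpath a (rcons s1 c) (rcons s2 b) [::]; rewrite !cats0 !last_rcons; apply=> //.
  by rewrite -size_eq0 size_rcons.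
case: (MST_edge_le wt_sym TM_MST Tab cO ca cb) => le.
  by have := lt_le_trans lt_ac le; rewrite ltxx.
by have := lt_le_trans lt_cb le; rewrite ltxx.
Qed.

End TreeMonotoneMST.

Theorem theorem4 (R : realFieldType) (n : nat)
    (E : rel 'I_n.+1) (r x : 'I_n.+1 -> 'I_n.+1 -> R)
    (Op Oq Opq : 'M[R]_n) (M : {set 'I_n.+1}) (TM : rel 'I_n.+1) :
  is_tree E ->
  degree E ord0 = 1%N ->
  (forall a b, r a b = r b a) -> (forall a b, x a b = x b a) ->
  (forall a b, E a b -> 0 < r a b /\ 0 < x a b) ->
  joint_cov Op Oq Opq ->
  (forall i j : 'I_n, i != j -> [/\ Op i j = 0, Oq i j = 0 & Opq i j = 0]) ->
  (forall i : 'I_n, 0 <= Opq i i) ->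
  (forall i : 'I_n, 0 < Op i i + Oq i i) ->
  ord0 \notin M ->
  (forall m, m \in M -> (degree E m <= 2)%N) ->
  is_MST (~: M) (phi E r x Op Oq Opq) TM ->
  (forall a b, a \notin M -> b \notin M -> E a b -> TM a b) /\
  (forall a b, TM a b -> ~~ E a b ->
     exists s : seq 'I_n.+1,
       [/\ path E a (rcons s b), uniq (a :: rcons s b) & all (mem M) s]).
Proof.
move=> /is_tree_onE tE _ r_sym x_sym rx_gt0 Ocov Odiag Opq_ge0 OpOq_gt0 _ _ TM_MST.
have r_gt0 a b : E a b -> 0 < r a b by case/rx_gt0.
have x_gt0 a b : E a b -> 0 < x a b by case/rx_gt0.
have Op_ge0 k : 0 <= Op k k by case: (joint_cov_diag_ge0 k Odiag Ocov).
have Oq_ge0 k : 0 <= Oq k k by case: (joint_cov_diag_ge0 k Odiag Ocov).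
have phi_sym := phi_sym tE r_sym x_sym r_gt0 x_gt0 Odiag.
have phi_lt := phi_lt_subpath tE r_sym x_sym r_gt0 x_gt0 Odiag Op_ge0 Oq_ge0 Opq_ge0 OpOq_gt0.
split=> [a b aM bM Eab | a b Tab _].
- exact: (tree_edge_in_MST tE phi_sym phi_lt TM_MST aM bM Eab).
- exact: (MST_edge_tree_path tE phi_sym phi_lt TM_MST Tab).
Qed.
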